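(* Let $n\ge 2$ and $a_1,\dots,a_n\in\mathbb{C}$. For $i=1,\dots,n$ let $p_i(x)=\prod_{l\ne i,\,1\le l\le n}(x-a_l)$. Then for every $x\in\mathbb{C}$ the Wronskian \[ W[p_1,\dots,p_n](x)=\det\begin{pmatrix}p_1(x)&\cdots&p_n(x)\\ p_1'(x)&\cdots&p_n'(x)\\ \vdots&&\vdots\\ p_1^{(n-1)}(x)&\cdots&p_n^{(n-1)}(x)\end{pmatrix} \] satisfies \[ W[p_1,\dots,p_n](x)=\Big(\prod_{k=0}^{n-1}k!\Big)\prod_{1\le i<k\le n}(a_i-a_k). \] *)

From HB Require Import structures.
From mathcomp Require Import all_boot all_order all_algebra.
Set Implicit Arguments. Unset Strict Implicit. Unset Printing Implicit Defensive.
Import Order.TTheory GRing.Theory Num.Theory.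
Local Open Scope ring_scope.

Definition pi_poly (R : comRingType) (n : nat) (a : 'I_n -> R) (i : 'I_n) : {poly R} :=
  \prod_(l < n | l != i) ('X - (a l)%:P).

Definition wronski_mx (R : comRingType) (n : nat) (p : 'I_n -> {poly R}) (x : R)
  : 'M[R]_n := \matrix_(r < n, j < n) ((p j)^`(r)).[x].

From HB Require Import structures.
From mathcomp Require Import all_boot all_order all_algebra.
Import Order.TTheory GRing.Theory Num.Theory.
Local Open Scope ring_scope.
Set Implicit Arguments. Unset Strict Implicit.

(* Expanding each p_j in the monomial basis factors the Wronskian matrix as
   D *m K, with D = ((X^m)^(r)(x)) triangular with diagonal m! and K the
   coefficient matrix of the p_j.  For the Vandermonde matrix V of the a_i,
   V^T *m K = diag (p_j(a_j)), and prod_j p_j(a_j) = det V * prod_(i<k) (a_i - a_k);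
   cancelling det V when the a_i are distinct (K has two equal columns
   otherwise) gives det K. *)

Section WronskianFactorization.
Variable R : comNzRingType.

Definition coef_mx n (p : 'I_n -> {poly R}) : 'M[R]_n :=
  \matrix_(m < n, j < n) (p j)`_m.

Definition derivn_monomial_mx n (x : R) : 'M[R]_n :=
  \matrix_(r < n, m < n) (('X^m)^`(r)).[x].

Lemma wronski_mx_factor n (p : 'I_n -> {poly R}) x :
  (forall j, size (p j) <= n)%N ->
  wronski_mx p x = derivn_monomial_mx n x *m coef_mx p.
Proof.
move=> size_p; apply/matrixP => r j; rewrite !mxE.
have -> : p j = \sum_(m < n) (p j)`_m *: 'X^m.
  rewrite -poly_def; apply/polyP => k; rewrite coef_poly.
  by case: ltnP => // le_nk; rewrite nth_default // (leq_trans (size_p j)).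
rewrite linear_sum horner_sum; apply: eq_bigr => m _.
by rewrite !mxE linearZ /= hornerZ mulrC.
Qed.

Lemma det_derivn_monomial_mx n x :
  \det (derivn_monomial_mx n x) = \prod_(k < n) (k`!)%:R.
Proof.
rewrite -det_tr det_trig; last first.
  apply/is_trig_mxP => r m lt_rm.
  by rewrite !mxE derivnXn ffact_small // mulr0n horner0.
by apply: eq_bigr => k _; rewrite !mxE derivnXn subnn ffactnn hornerMn hornerC.
Qed.

End WronskianFactorization.

Section Lagrange.
Variable R : comNzRingType.
Variables (n : nat) (a : 'I_n -> R).

Lemma size_pi_poly j : size (pi_poly a j) = n.
Proof.
rewrite /pi_poly -big_filter; have [e _ _ [_ size_e]] := big_enumP.
by rewrite size_prod_XsubC size_e cardC1 card_ord; case: n j {size_e} => [[]|].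
Qed.

Lemma pi_poly_eq i k : a i = a k -> pi_poly a i = pi_poly a k.
Proof.
have [-> //|ne_ik eq_a] := eqVneq i k.
rewrite /pi_poly (bigD1 k) 1?eq_sym //= [RHS](bigD1 i) //= eq_a.
by congr (_ * _); apply: eq_bigl => l; rewrite andbC.
Qed.

Lemma Vandermonde_tr_mul_coef_pi_poly :
  (Vandermonde n (\row_j a j))^T *m coef_mx (pi_poly a) =
  diag_mx (\row_j \prod_(l | l != j) (a j - a l)).
Proof.
apply/matrixP => i j; rewrite !mxE.
rewrite (eq_bigr (fun m : 'I_n => (pi_poly a j)`_m * a i ^+ m)); last first.
  by move=> m _; rewrite !mxE mulrC.
rewrite -horner_coef_wide ?size_pi_poly // /pi_poly horner_prod.
under eq_bigr => l _ do rewrite hornerXsubC.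
have [<-|ne_ij] := eqVneq i j; first by rewrite mulr1n.
by rewrite mulr0n (bigD1 i) //= subrr mul0r.
Qed.

End Lagrange.

Lemma big_ord_neq_split (R : comNzRingType) n (f : 'I_n -> 'I_n -> R) :
  \prod_j \prod_(l | l != j) f j l =
  (\prod_(i < n) \prod_(k < n | (i < k)%N) f k i) *
  \prod_(i < n) \prod_(k < n | (i < k)%N) f i k.
Proof.
under eq_bigr => j _ do rewrite (bigID (fun l : 'I_n => (l < j)%N)) /=.
rewrite big_split /=; congr (_ * _).
  rewrite (exchange_big_dep xpredT) //=; apply: eq_bigr => i _.
  by apply: eq_bigl => k; rewrite neq_ltn orbC; case: ltngtP.
by apply: eq_bigr => i _; apply: eq_bigl => k; rewrite neq_ltn; case: ltngtP.
Qed.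

Lemma prod_ord_lt_subr_eq0 (R : comNzRingType) n (a : 'I_n -> R) i k :
  i != k -> a i = a k -> \prod_(i < n) \prod_(k < n | (i < k)%N) (a i - a k) = 0.
Proof.
wlog lt_ik : i k / (i < k)%N => [wlog_lt ne_ik eq_a | _ eq_a].
  case: (ltngtP i k) => [lt_ik | lt_ki | /val_inj eq_ik].
  - exact: wlog_lt lt_ik ne_ik eq_a.
  - by apply: (wlog_lt k i); rewrite // eq_sym.
  - by rewrite eq_ik eqxx in ne_ik.
by rewrite (bigD1 i) //= (bigD1 k) //= eq_a subrr !mul0r.
Qed.

Lemma det_coef_mx_pi_poly (R : idomainType) n (a : 'I_n -> R) :
  \det (coef_mx (pi_poly a)) = \prod_(i < n) \prod_(k < n | (i < k)%N) (a i - a k).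
Proof.
have [/injectiveP inj_a | /injectivePn [i [k ne_ik eq_a]]] := boolP (injectiveb a).
  set V := \prod_(i < n) \prod_(k < n | (i < k)%N) (a k - a i).
  have V_neq0 : V != 0.
    apply/prodf_neq0 => i _; apply/prodf_neq0 => k lt_ik.
    by rewrite subr_eq0 (inj_eq inj_a) neq_ltn lt_ik orbT.
  apply: (mulfI V_neq0); rewrite -big_ord_neq_split.
  have det_VK : \det (Vandermonde n (\row_j a j))^T * \det (coef_mx (pi_poly a))
      = \prod_j \prod_(l | l != j) (a j - a l).
    rewrite -det_mulmx Vandermonde_tr_mul_coef_pi_poly det_diag.
    by apply: eq_bigr => j _; rewrite mxE.
  rewrite -det_VK det_tr det_Vandermonde; congr (_ * _).
  by apply: eq_bigr => i' _; apply: eq_bigr => k' _; rewrite !mxE.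
have two_equal_columns : \det (coef_mx (pi_poly a)) = 0.
  rewrite -det_tr (determinant_alternate ne_ik) // => m.
  by rewrite !mxE (pi_poly_eq eq_a).
by rewrite two_equal_columns (prod_ord_lt_subr_eq0 ne_ik eq_a).
Qed.

Theorem mainTheorem3 (C : numClosedFieldType) (n : nat) (hn : (2 <= n)%N)
  (a : 'I_n -> C) (x : C) :
  \det (wronski_mx (pi_poly a) x) =
  (\prod_(k < n) (k`!)%:R) * \prod_(i < n) \prod_(k < n | (i < k)%N) (a i - a k).
Proof.
have size_p j : (size (pi_poly a j) <= n)%N by rewrite size_pi_poly.
by rewrite (wronski_mx_factor _ size_p) det_mulmx det_derivn_monomial_mx det_coef_mx_pi_poly.
Qed.
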